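(* Let $B$ be a supersoluble brace. If $B$ is left-nilpotent and $\operatorname{Ker}(\lambda)\le Z_n(B,\cdot)$ for some $n\in\mathbb{N}$, then $(B,\cdot)$ is nilpotent.
   Context: A brace (skew left brace) is a set $B$ with two binary operations $+$ and $\cdot$ such that $(B,+)$ and $(B,\cdot)$ are groups and $a(b+c)=ab-a+ac$ for all $a,b,c\in B$. $\lambda_a(b)=-a+ab$ defines a homomorphism $\lambda\colon(B,\cdot)\to\operatorname{Aut}(B,+)$; $a*b=-a+ab-b$; for subsets $X,Y$, $X*Y$ is the subgroup of $(B,+)$ generated by all $x*y$, $x\in X,y\in Y$. $B$ is left-nilpotent if, with $L_0=B$ and $L_{k+1}=B*L_k$, one has $L_m=\{0\}$ for some $m$. $Z_n(B,\cdot)$ is the $n$-th term of the upper central series of the group $(B,\cdot)$. An ideal is a subset that is a subgroup of both groups, normal in both, and invariant under all $\lambda_b$; quotients by ideals are braces. $\operatorname{Soc}(B)=\operatorname{Ker}\lambda\cap Z(B,+)$. $B$ is supersoluble if there is a finite chain of ideals $\{0\}=I_0\le\dots\le I_n=B$ such that for each $i$, either $(I_{i+1}/I_i,+)$ is infinite cyclic and $I_{i+1}/I_i\le\operatorname{Soc}(B/I_i)$, or $I_{i+1}/I_i$ has prime order. *)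

From mathcomp Require Import all_boot all_algebra.
Set Implicit Arguments. Unset Strict Implicit. Unset Printing Implicit Defensive.

(** A (skew left) brace: (B,+) and (B,.) are groups (not necessarily abelian)
    and a(b+c) = ab - a + ac.  The two identities are kept as separate data. *)
Record brace := Brace {
  car :> Type;
  badd : car -> car -> car;
  bopp : car -> car;
  bzero : car;
  bmul : car -> car -> car;
  binv : car -> car;
  bone : car;
  baddA : forall a b c, badd a (badd b c) = badd (badd a b) c;
  badd0r : forall a, badd a bzero = a;
  badd0l : forall a, badd bzero a = a;
  baddNr : forall a, badd a (bopp a) = bzero;
  baddNl : forall a, badd (bopp a) a = bzero;
  bmulA : forall a b c, bmul a (bmul b c) = bmul (bmul a b) c;
  bmul1r : forall a, bmul a bone = a;
  bmul1l : forall a, bmul bone a = a;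
  bmulVr : forall a, bmul a (binv a) = bone;
  bmulVl : forall a, bmul (binv a) a = bone;
  bbrace : forall a b c,
      bmul a (badd b c) = badd (badd (bmul a b) (bopp a)) (bmul a c)
}.

Section BraceDefs.
Variable B : brace.
Local Notation "x + y" := (badd x y).
Local Notation "- x" := (bopp x).
Local Notation "x * y" := (bmul x y).

Definition blambda (a b : B) : B := - a + a * b.
Definition bstar (a b : B) : B := (- a + a * b) + - b.

Inductive gen_add (S : B -> Prop) : B -> Prop :=
| gen_add0 : gen_add S (bzero B)
| gen_add_in x : S x -> gen_add S x
| gen_addN x : gen_add S x -> gen_add S (- x)
| gen_addD x y : gen_add S x -> gen_add S y -> gen_add S (x + y).

Definition star_set (X Y : B -> Prop) : B -> Prop :=
  gen_add (fun z => exists x y, X x /\ Y y /\ z = bstar x y).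

Fixpoint lseries (k : nat) : B -> Prop :=
  match k with
  | 0 => fun _ => True
  | k'.+1 => star_set (fun _ => True) (lseries k')
  end.

Definition left_nilpotent : Prop :=
  exists m, forall x, lseries m x <-> x = bzero B.

Definition bcomm (x y : B) : B := binv x * binv y * x * y.

(** upper central series of (B,.): Z_0 = 1, Z_{n+1}/Z_n = Z(B/Z_n) *)
Fixpoint zcent (n : nat) : B -> Prop :=
  match n with
  | 0 => fun x => x = bone B
  | n'.+1 => fun x => forall y, zcent n' (bcomm x y)
  end.

Definition mul_nilpotent : Prop := exists c, forall x, zcent c x.

Definition ker_lambda (a : B) : Prop := forall b, blambda a b = b.

Definition is_ideal (I : B -> Prop) : Prop :=
  I (bzero B) /\
  (forall x y, I x -> I y -> I (x + y)) /\
  (forall x, I x -> I (- x)) /\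
  I (bone B) /\
  (forall x y, I x -> I y -> I (x * y)) /\
  (forall x, I x -> I (binv x)) /\
  (forall a x, I x -> I ((a + x) + - a)) /\
  (forall a x, I x -> I ((a * x) * binv a)) /\
  (forall b x, I x -> I (blambda b x)).

Definition zmul (g : B) (k : int) : B :=
  match k with
  | Posz n => iter n (badd g) (bzero B)
  | Negz n => - iter n.+1 (badd g) (bzero B)
  end.

(** Conditions on the factor J/I (I <= J ideals), written in B:
    x + I = y + I  iff  I (-y + x). *)

(* J/I <= Soc(B/I): lambda_{xI} = id on B/I and xI central in (B/I,+) *)
Definition factor_in_socle (I J : B -> Prop) : Prop :=
  forall x, J x -> forall y,
    I (blambda x y + - y) /\ I (((x + y) + - x) + - y).

Definition factor_inf_cyclic (I J : B -> Prop) : Prop :=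
  (exists g, J g /\ forall x, J x -> exists k : int, I (- zmul g k + x)) /\
  ~ (exists (n : nat) (f : 'I_n -> B),
        forall x, J x -> exists i, I (- f i + x)).

Definition factor_prime_order (I J : B -> Prop) : Prop :=
  exists p, prime p /\
    exists f : 'I_p -> B,
      [/\ forall i, J (f i),
          forall i j, I (- f i + f j) -> i = j &
          forall x, J x -> exists i, I (- f i + x)].

Definition supersoluble : Prop :=
  exists (n : nat) (I : nat -> B -> Prop),
    [/\ forall x, I 0 x <-> x = bzero B,
        forall x, I n x,
        forall i, i <= n -> is_ideal (I i),
        forall i x, i < n -> I i x -> I i.+1 x &
        forall i, i < n ->
          (factor_inf_cyclic (I i) (I i.+1) /\ factor_in_socle (I i) (I i.+1))
          \/ factor_prime_order (I i) (I i.+1)].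

End BraceDefs.

From HB Require Import structures.
From mathcomp Require Import all_boot all_algebra all_fingroup.
From mathcomp Require Import zify.
From Stdlib Require Import Classical ClassicalEpsilon.
Set Implicit Arguments. Unset Strict Implicit. Unset Printing Implicit Defensive.
Import GRing.Theory.

(* For each b, λ_b induces an automorphism of every factor I_(i+1)/I_i of the
   supersoluble series 0 = I_0 <= ... <= I_n = B.  Its fixed points form a
   subgroup, which is everything or nothing: for a factor of prime order by
   Lagrange, for an infinite cyclic factor because the automorphism is
   multiplication by 1 or -1.  Left nilpotency excludes "nothing": if z in
   I_(i+1) is not in I_i, neither are b*z, b*(b*z), ..., yet these eventually
   vanish.  So every λ_b is trivial on every factor.  If λ_a is trivial on all
   the I_(i+j)/I_i and λ_b on all the I_(i+1)/I_i, then λ_[a,b] is trivial on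
   all the I_(i+j+1)/I_i.  Hence n-fold commutators [x, y_1, ..., y_n] lie in
   Ker λ <= Z_c(B,.), and (B,.) is nilpotent of class at most n + c. *)

Section Brace.
Variable B : brace.
Local Notation "x + y" := (badd x y).
Local Notation "- x" := (bopp x).
Local Notation "x * y" := (bmul x y).
Local Notation "0" := (bzero B).

Lemma baddKr (a b : B) : - a + (a + b) = b.
Proof. by rewrite baddA baddNl badd0l. Qed.

Lemma baddNKr (a b : B) : a + (- a + b) = b.
Proof. by rewrite baddA baddNr badd0l. Qed.

Lemma baddrK (a b : B) : a + b + - b = a.
Proof. by rewrite -baddA baddNr badd0r. Qed.

Lemma bopp0 : - 0 = 0.
Proof. by rewrite -{2}(baddNr 0) badd0l. Qed.

Lemma boppK (a : B) : - - a = a.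
Proof. by rewrite -(badd0r (- - a)) -(baddNl a) baddA baddNl badd0l. Qed.

Lemma badd_eq0 (a b : B) : a + b = 0 -> b = - a.
Proof. by move=> ab0; rewrite -(baddKr a b) ab0 badd0r. Qed.

Lemma boppD (a b : B) : - (a + b) = - b + - a.
Proof. by apply/esym/badd_eq0; rewrite -baddA baddNKr baddNr. Qed.

Lemma bmulr0 (a : B) : a * 0 = a.
Proof.
have a0 : a * 0 = a * 0 + - a + a * 0 by rewrite -bbrace badd0l.
have : a * 0 + - a = 0 by rewrite -(baddrK (a * 0 + - a) (a * 0)) -a0 baddNr.
by move/badd_eq0 => e; rewrite -[RHS]boppK e boppK.
Qed.

Lemma bmulrN (a b : B) : a * - b = a + - (a * b) + a.
Proof.
have ab : a = a * b + - a + a * - b by rewrite -bbrace baddNr bmulr0.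
by rewrite -[a * - b](baddKr (a * b + - a)) -ab boppD boppK.
Qed.

Lemma blambdaD (a x y : B) : blambda a (x + y) = blambda a x + blambda a y.
Proof. by rewrite /blambda bbrace -!baddA. Qed.

Lemma blambda0 (a : B) : blambda a 0 = 0.
Proof. by rewrite /blambda bmulr0 baddNl. Qed.

Lemma blambdaN (a x : B) : blambda a (- x) = - blambda a x.
Proof. by apply: badd_eq0; rewrite -blambdaD baddNr blambda0. Qed.

Lemma blambda1 (x : B) : blambda (bone B) x = x.
Proof.
have one0 : bone B = 0 by rewrite -(bmulr0 (bone B)) bmul1l.
by rewrite /blambda bmul1l one0 bopp0 badd0l.
Qed.

Lemma blambdaM (a b x : B) : blambda (a * b) x = blambda a (blambda b x).
Proof. by rewrite /blambda bbrace bmulrN bmulA -!baddA baddKr baddNKr. Qed.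

Lemma blambdaK (a x : B) : blambda (binv a) (blambda a x) = x.
Proof. by rewrite -blambdaM bmulVl blambda1. Qed.

Lemma blambdaVK (a x : B) : blambda a (blambda (binv a) x) = x.
Proof. by rewrite -blambdaM bmulVr blambda1. Qed.

Definition add_normal (N : B -> Prop) :=
  [/\ N 0, forall x y, N x -> N y -> N (x + y), forall x, N x -> N (- x) &
      forall a x, N x -> N (a + x + - a)].

Definition lambda_stable (N : B -> Prop) := forall c z, N z -> N (blambda c z).

Definition eqmod (N : B -> Prop) (x y : B) := N (- x + y).

Definition acts_trivially_mod (N M : B -> Prop) (a : B) :=
  forall m, M m -> eqmod N m (blambda a m).

Lemma ideal_add_normal (I : B -> Prop) : is_ideal I -> add_normal I.
Proof. by case=> [? [? [? [_ [_ [_ [? _]]]]]]]; split. Qed.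

Lemma ideal_lambda_stable (I : B -> Prop) : is_ideal I -> lambda_stable I.
Proof. by case=> [_ [_ [_ [_ [_ [_ [_ [_ ?]]]]]]]]. Qed.

Lemma eqmod0 (N : B -> Prop) z : eqmod N 0 z <-> N z.
Proof. by rewrite /eqmod bopp0 badd0l. Qed.

Section NormalSubgroup.
Variable N : B -> Prop.
Hypothesis N_normal : add_normal N.

Lemma normal0 : N 0.
Proof. by case: N_normal. Qed.

Lemma normalD x y : N x -> N y -> N (x + y).
Proof. by case: N_normal => _ + _ _; apply. Qed.

Lemma normalN x : N x -> N (- x).
Proof. by case: N_normal => _ _ + _; apply. Qed.

Lemma normalJ a x : N x -> N (a + x + - a).
Proof. by case: N_normal => _ _ _; apply. Qed.

Lemma normalJN a x : N x -> N (- a + x + a).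
Proof. by move/(normalJ (- a)); rewrite boppK. Qed.

Lemma eqmod_refl x : eqmod N x x.
Proof. by rewrite /eqmod baddNl; apply: normal0. Qed.

Lemma eqmod_sym x y : eqmod N x y -> eqmod N y x.
Proof. by move/normalN; rewrite /eqmod boppD boppK. Qed.

Lemma eqmod_trans x y z : eqmod N x y -> eqmod N y z -> eqmod N x z.
Proof. by move=> xy yz; have := normalD xy yz; rewrite -baddA baddNKr. Qed.

Lemma eqmodDl a x y : eqmod N x y -> eqmod N (a + x) (a + y).
Proof. by rewrite /eqmod boppD -baddA baddKr. Qed.

Lemma eqmodDr a x y : eqmod N x y -> eqmod N (x + a) (y + a).
Proof. by move/(normalJN a); rewrite /eqmod boppD -!baddA. Qed.

Lemma eqmodD x x' y y' : eqmod N x x' -> eqmod N y y' -> eqmod N (x + y) (x' + y').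
Proof. by move=> xx' yy'; apply: eqmod_trans (eqmodDr y xx') (eqmodDl x' yy'). Qed.

Lemma eqmodN x y : eqmod N x y -> eqmod N (- x) (- y).
Proof.
move=> xy; have := normalJ x (normalN xy).
by rewrite /eqmod boppD !boppK -!baddA baddNr badd0r.
Qed.

Lemma eqmod_subr x y : eqmod N x y <-> N (y + - x).
Proof.
split=> [/(normalJ y)|/(normalJN x)]; rewrite -!baddA.
  by rewrite baddNr badd0r.
by rewrite baddNl badd0r.
Qed.

Hypothesis N_stable : lambda_stable N.

Lemma eqmod_lambda b x y : eqmod N x y -> eqmod N (blambda b x) (blambda b y).
Proof. by move/(N_stable b); rewrite blambdaD blambdaN. Qed.

Lemma eqmod_lambda_in b z : N z -> eqmod N z (blambda b z).
Proof. by move=> Nz; apply: normalD (normalN Nz) (N_stable b Nz). Qed.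

(* Applying λ_a to x + y - x shows that x and λ_a x conjugate M/N alike. *)
Lemma displacement_commutes_mod (M : B -> Prop) (a : B) :
  add_normal M -> acts_trivially_mod N M a ->
  forall x y, M y ->
    eqmod N (- x + blambda a x + y) (y + (- x + blambda a x)).
Proof.
move=> [_ _ _ M_conj] a_triv x y My.
have conj_x : eqmod N (x + y + - x) (blambda a x + blambda a y + - blambda a x).
  by rewrite -blambdaN -!blambdaD; exact/a_triv/M_conj.
have conj_lx : eqmod N (blambda a x + y + - blambda a x)
                       (blambda a x + blambda a y + - blambda a x).
  by apply: eqmodDr; apply: eqmodDl; apply: a_triv.
have := eqmodDr (blambda a x) (eqmodDl (- x) (eqmod_trans conj_x (eqmod_sym conj_lx))).
by rewrite -!baddA baddKr baddNl badd0r => /eqmod_sym.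
Qed.

Lemma eqmod_lambda_bcomm a b x :
  eqmod N (- x + blambda b x) (blambda a (- x + blambda b x)) ->
  eqmod N (- x + blambda a x) (blambda b (- x + blambda a x)) ->
  eqmod N (- x + blambda a x + (- x + blambda b x))
          (- x + blambda b x + (- x + blambda a x)) ->
  eqmod N x (blambda (bcomm a b) x).
Proof.
set d := - x + blambda a x; set e := - x + blambda b x => e_fix d_fix de_comm.
have ab_x : blambda a (blambda b x) = x + d + blambda a e.
  by rewrite -[blambda b x](baddNKr x) blambdaD -[blambda a x](baddNKr x).
have ba_x : blambda b (blambda a x) = x + e + blambda b d.
  by rewrite -[blambda a x](baddNKr x) blambdaD -[blambda b x](baddNKr x).
have : eqmod N (blambda b (blambda a x)) (blambda a (blambda b x)).
  rewrite ab_x ba_x; apply: eqmod_trans (eqmodDl _ (eqmod_sym d_fix)) _.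
  apply: eqmod_trans _ (eqmodDl _ e_fix); rewrite -!(baddA x).
  by apply: eqmodDl; apply: eqmod_sym.
move/(eqmod_lambda (binv b))/(eqmod_lambda (binv a)).
by rewrite !blambdaK /bcomm !blambdaM.
Qed.

End NormalSubgroup.

Section Layers.
Variables (I : nat -> B -> Prop) (n : nat).
Hypothesis layer_normal : forall i, i <= n -> add_normal (I i) /\ lambda_stable (I i).

Definition trivial_on_layers (j : nat) (b : B) :=
  forall i, i + j <= n -> acts_trivially_mod (I i) (I (i + j)) b.

Lemma trivial_on_layers0 b : trivial_on_layers 0 b.
Proof.
move=> i; rewrite addn0 => le_in x Ix.
by have [Ii_normal Ii_stable] := layer_normal le_in; apply: eqmod_lambda_in.
Qed.

Lemma trivial_on_layers_bcomm j a b :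
  trivial_on_layers j a -> trivial_on_layers 1 b -> trivial_on_layers j.+1 (bcomm a b).
Proof.
move=> a_triv b_triv i lt_ijn x Ix.
have [Ii_normal Ii_stable] := layer_normal (i := i) ltac:(lia).
have [Iij_normal _] := layer_normal (i := (i + j)%N) ltac:(lia).
have Id : I (i + 1) (- x + blambda a x).
  have ij1 : (i + 1 + j = i + j.+1)%N by lia.
  by apply: (a_triv (i + 1)%N _ x); rewrite ij1.
have Ie : I (i + j) (- x + blambda b x).
  by apply: (b_triv (i + j)%N _ x); rewrite addn1 -addnS.
apply: eqmod_lambda_bcomm => //.
- by apply: a_triv => //; lia.
- by apply: b_triv => //; lia.
- by apply: (displacement_commutes_mod Ii_normal Iij_normal (a_triv i _)) Ie; lia.
Qed.

Hypotheses (I0 : forall x, I 0 x <-> x = 0) (In : forall x, I n x).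

Lemma trivial_on_layers_ker x : trivial_on_layers n x -> ker_lambda x.
Proof.
move=> x_triv y; have /I0 := x_triv 0%N (leqnn n) y (In y).
by move/badd_eq0; rewrite boppK.
Qed.

Lemma trivial_on_layers_zcent c :
  (forall b, trivial_on_layers 1 b) -> (forall a : B, ker_lambda a -> zcent c a) ->
  forall k x, k <= n -> trivial_on_layers (n - k) x -> zcent (k + c) x.
Proof.
move=> layers_triv ker_zcent; elim=> [|k IHk] le_kn x x_triv.
  by apply/ker_zcent/trivial_on_layers_ker; rewrite subn0 in x_triv.
rewrite addSn => y; apply: IHk; first lia.
by rewrite -subnSK //; apply: trivial_on_layers_bcomm.
Qed.

Lemma trivial_on_layers_mul_nilpotent c :
  (forall b, trivial_on_layers 1 b) -> (forall a : B, ker_lambda a -> zcent c a) ->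
  mul_nilpotent B.
Proof.
move=> layers_triv ker_zcent; exists (n + c)%N => x.
by apply: trivial_on_layers_zcent => //; rewrite subnn; apply: trivial_on_layers0.
Qed.

End Layers.

Lemma iter_bstar_lseries (b z : B) k : lseries k (iter k (bstar b) z).
Proof. by elim: k => [|k IHk] //=; apply: gen_add_in; exists b, (iter k (bstar b) z). Qed.

Lemma left_nilpotent_fixfree (I J : B -> Prop) b :
  add_normal I -> add_normal J -> lambda_stable J -> left_nilpotent B ->
  (forall z, J z -> eqmod I z (blambda b z) -> I z) ->
  forall z, J z -> I z.
Proof.
move=> I_normal J_normal J_stable [m Lm0] fix_in_I z Jz; apply: NNPP => notIz.
have orbit_out k : J (iter k (bstar b) z) /\ ~ I (iter k (bstar b) z).
  elim: k => [//|k [Jk notIk]] /=; split.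
    exact: (normalD J_normal (J_stable b _ Jk) (normalN J_normal Jk)).
  by move=> Ik; apply/notIk/fix_in_I => //; apply/eqmod_subr.
have [_] := orbit_out m; apply.
by have /Lm0 -> := iter_bstar_lseries b z m; apply: normal0 I_normal.
Qed.

Section PrimeFactor.
Variables (I J : B -> Prop) (p : nat) (f : 'I_p -> B).
Hypotheses (I_normal : add_normal I) (J_normal : add_normal J) (p_prime : prime p).
Hypotheses (fJ : forall i, J (f i)) (f_inj : forall i j, eqmod I (f i) (f j) -> i = j)
           (f_onto : forall x, J x -> exists i, eqmod I (f i) x).

Definition coset_index (z : B) : 'I_p :=
  epsilon (inhabits (Ordinal (prime_gt0 p_prime))) (fun i => eqmod I (f i) z).

Lemma coset_indexP z : J z -> eqmod I (f (coset_index z)) z.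
Proof. by move/f_onto; apply: epsilon_spec. Qed.

Lemma coset_index_eq z z' :
  J z -> J z' -> eqmod I z z' -> coset_index z = coset_index z'.
Proof.
move=> Jz Jz' zz'; have z_z'i := eqmod_sym I_normal (coset_indexP Jz').
exact: f_inj (eqmod_trans I_normal (eqmod_trans I_normal (coset_indexP Jz) zz') z_z'i).
Qed.

Lemma coset_index_f i : coset_index (f i) = i.
Proof. exact/f_inj/coset_indexP. Qed.

(* The group J/I, carried by the indices of the transversal f. *)
Definition factor_group : Type := 'I_p.
HB.instance Definition _ := Finite.on factor_group.

Definition factor_mul (i j : factor_group) : factor_group := coset_index (f i + f j).
Definition factor_one : factor_group := coset_index 0.
Definition factor_inv (i : factor_group) : factor_group := coset_index (- f i).

Lemma factor_mulA : associative factor_mul.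
Proof.
move=> i j k; rewrite /factor_mul.
have Jf_add l l' : J (f l + f l') by apply: (normalD J_normal).
apply: coset_index_eq => //; apply: (eqmod_sym I_normal).
apply: (eqmod_trans I_normal (eqmodDr I_normal _ (coset_indexP (Jf_add i j)))).
rewrite -(baddA (f i)); apply: eqmodDl.
exact: (eqmod_sym I_normal (coset_indexP (Jf_add j k))).
Qed.

Lemma factor_mul1 : left_id factor_one factor_mul.
Proof.
move=> i; rewrite /factor_mul /factor_one -[in RHS](coset_index_f i).
apply: coset_index_eq; [exact: (normalD J_normal) | by [] |].
by have := eqmodDr I_normal (f i) (coset_indexP (normal0 J_normal)); rewrite badd0l.
Qed.

Lemma factor_mulV : left_inverse factor_one factor_inv factor_mul.
Proof.
move=> i; rewrite /factor_mul /factor_one /factor_inv.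
apply: coset_index_eq; [exact: (normalD J_normal) | exact: normal0 |].
by have := eqmodDr I_normal (f i) (coset_indexP (normalN J_normal (fJ i))); rewrite baddNl.
Qed.

HB.instance Definition _ :=
  Finite_isGroup.Build factor_group factor_mulA factor_mul1 factor_mulV.

Lemma prime_factor_dichotomy (K : B -> Prop) :
  K 0 -> (forall x y, K x -> K y -> K (x + y)) -> (forall x, I x -> K x) ->
  (forall z, J z -> K z) \/ (forall z, J z -> K z -> I z).
Proof.
move=> K0 KD IK.
have K_eqmod z z' : eqmod I z z' -> K z -> K z'.
  by move=> zz' Kz; rewrite -(baddNKr z z'); apply/KD/IK.
have K_index z : J z -> K (f (coset_index z)) <-> K z.
  move=> /coset_indexP zi; split; apply: K_eqmod => //; exact: eqmod_sym.
pose inK (i : factor_group) := if excluded_middle_informative (K (f i)) then true else false.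
have inKP i : inK i <-> K (f i) by rewrite /inK; case: excluded_middle_informative.
have KG : group_set [set i | inK i].
  apply/group_setP; split=> [|i j]; rewrite !inE.
    by apply/inKP/K_index => //; apply: normal0.
  move=> /inKP Ki /inKP Kj; apply/inKP/K_index; first exact: (normalD J_normal).
  exact: KD.
have K_index_in z : J z -> K z -> coset_index z \in Group KG.
  by move=> Jz /(K_index z Jz) Kz; rewrite inE; apply/inKP.
have := cardSg (subsetT (Group KG)); rewrite cardsT card_ord => KG_dvd_p.
have [/card1_trivg KG1 | KG_nt1] := eqVneq #|Group KG| 1.
  right=> z Jz Kz; have := K_index_in z Jz Kz; rewrite KG1 => /set1gP z1.
  apply/eqmod0; apply: (eqmod_trans I_normal _ (coset_indexP Jz)).
  by rewrite z1; apply: (eqmod_sym I_normal); apply: coset_indexP; apply: normal0.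
have KG_full : Group KG = [set: factor_group] :> {set _}.
  move/(prime_nt_dvdP p_prime KG_nt1): KG_dvd_p => KG_p.
  by apply/eqP; rewrite eqEcard subsetT cardsT card_ord KG_p leqnn.
left=> z Jz; apply/K_index => //; apply/inKP.
by have := in_setT (coset_index z : factor_group); rewrite -KG_full inE.
Qed.

End PrimeFactor.

Lemma iter_baddS (g : B) k : iter k.+1 (badd g) 0 = iter k (badd g) 0 + g.
Proof.
elim: k => [|k IHk]; first by rewrite /= badd0r badd0l.
by rewrite [LHS]iterS [in LHS]IHk baddA.
Qed.

Lemma zmulNn (g : B) k : zmul g (- k%:Z)%R = - iter k (badd g) 0.
Proof. by case: k => [|k] /=; rewrite ?bopp0. Qed.

Lemma zmulS (g : B) k : zmul g (k + 1)%R = zmul g k + g.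
Proof.
case: k => k; first by rewrite -PoszD addn1 /= -iter_baddS.
have -> : (Negz k + 1)%R = (- k%:Z)%R by rewrite NegzE; lia.
by rewrite zmulNn /= boppD -baddA baddNl badd0r.
Qed.

Lemma zmulSN (g : B) k : zmul g (k - 1)%R = zmul g k + - g.
Proof. by rewrite -{2}(subrK 1%R k) zmulS baddrK. Qed.

Lemma zmulD (g : B) k l : zmul g (k + l)%R = zmul g k + zmul g l.
Proof.
elim/int_rect: l => [|l IHl|l IHl].
- by rewrite addr0 /= badd0r.
- by rewrite -addn1 PoszD addrA !zmulS IHl baddA.
- by rewrite -addn1 PoszD opprD addrA !zmulSN IHl baddA.
Qed.

Lemma zmulN (g : B) k : zmul g (- k)%R = - zmul g k.
Proof. by apply: badd_eq0; rewrite -zmulD subrr. Qed.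

Lemma zmul1 (g : B) : zmul g 1 = g.
Proof. by rewrite /= badd0r. Qed.

Lemma zmulM (g : B) k l : zmul (zmul g k) l = zmul g (k * l)%R.
Proof.
elim/int_rect: l => [|l IHl|l IHl].
- by rewrite mulr0.
- by rewrite -addn1 PoszD zmulS IHl mulrDr mulr1 zmulD.
- by rewrite -addn1 PoszD opprD zmulSN IHl mulrDr mulrN1 zmulD zmulN.
Qed.

Lemma blambda_zmul b (y : B) k : blambda b (zmul y k) = zmul (blambda b y) k.
Proof.
have iter_lambda m : blambda b (iter m (badd y) 0) = iter m (badd (blambda b y)) 0.
  by elim: m => [|m IHm] /=; rewrite ?blambda0 // blambdaD IHm.
by case: k => m; rewrite /zmul ?blambdaN iter_lambda.
Qed.

Lemma normal_zmul (N : B -> Prop) (y : B) k : add_normal N -> N y -> N (zmul y k).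
Proof.
move=> N_normal Ny.
have N_iter m : N (iter m (badd y) 0).
  by elim: m => [|m IHm] /=; [apply: normal0 | apply: normalD].
by case: k => m; rewrite /zmul; [apply: N_iter | apply: (normalN N_normal)].
Qed.

Lemma eqmod_zmul (N : B -> Prop) (y y' : B) k :
  add_normal N -> eqmod N y y' -> eqmod N (zmul y k) (zmul y' k).
Proof.
move=> N_normal yy'.
have eqmod_iter m : eqmod N (iter m (badd y) 0) (iter m (badd y') 0).
  by elim: m => [|m IHm] /=; [apply: eqmod_refl | apply: eqmodD].
by case: k => m; rewrite /zmul; [apply: eqmod_iter | apply: (eqmodN N_normal)].
Qed.

Lemma inf_cyclic_zmul_eq0 (I J : B -> Prop) (g : B) :
  add_normal I -> (forall x, J x -> exists k, eqmod I (zmul g k) x) ->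
  ~ (exists n (f : 'I_n -> B), forall x, J x -> exists i, eqmod I (f i) x) ->
  forall d, I (zmul g d) -> d = 0%R.
Proof.
move=> I_normal g_gen J_infinite d Igd; apply: NNPP => d_neq0; apply: J_infinite.
exists `|d|%N, (fun i : 'I_`|d|%N => zmul g (Posz i)) => x Jx.
have [k gk_x] := g_gen x Jx.
have r_ge0 : (0 <= (k %% d)%Z)%R by apply: modz_ge0; apply/eqP.
have r_lt : (`|(k %% d)%Z| < `|d|)%N.
  have : ((k %% d)%Z < `|d|%:Z)%R by rewrite abszE; apply: ltz_mod; apply/eqP.
  lia.
exists (Ordinal r_lt); apply: (eqmod_trans I_normal _ gk_x).
have -> : Posz `|(k %% d)%Z| = (k %% d)%Z by lia.
have gk : zmul g k = zmul (zmul g d) (k %/ d)%Z + zmul g (k %% d)%Z.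
  by rewrite zmulM -zmulD mulrC -divz_eq.
rewrite [zmul g k]gk.
by rewrite /eqmod baddA; apply: (normalJN I_normal); apply: normal_zmul.
Qed.

(* λ_b acts on J/I ≅ Z as multiplication by a unit c = 1 or -1. *)
Lemma inf_cyclic_dichotomy (I J : B -> Prop) b :
  add_normal I -> lambda_stable I -> lambda_stable J -> factor_inf_cyclic I J ->
  acts_trivially_mod I J b \/ (forall z, J z -> eqmod I z (blambda b z) -> I z).
Proof.
move=> I_normal I_stable J_stable [[g [Jg g_gen]] J_infinite].
have g_free := inf_cyclic_zmul_eq0 I_normal g_gen J_infinite.
have zmul_inj k l : eqmod I (zmul g k) (zmul g l) -> k = l.
  by rewrite /eqmod -zmulN -zmulD => /g_free/eqP; rewrite addrC subr_eq0 => /eqP.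
have [c gc] := g_gen _ (J_stable b g Jg).
have [c' gc'] := g_gen _ (J_stable (binv b) g Jg).
have lambda_zmul k : eqmod I (zmul g (c * k)%R) (blambda b (zmul g k)).
  by rewrite blambda_zmul -zmulM; apply: eqmod_zmul.
have cc' : (c * c')%R = 1%R.
  apply: esym; apply: zmul_inj; rewrite zmul1.
  have := eqmod_lambda I_stable b gc'; rewrite blambdaVK => /(eqmod_sym I_normal) g_c'g.
  exact: (eqmod_trans I_normal g_c'g (eqmod_sym I_normal (lambda_zmul c'))).
have [c1|cN1] : c = 1%R \/ c = (-1)%R.
  move/(congr1 absz): cc'; rewrite abszM => /eqP.
  by rewrite muln_eq1 => /andP[/eqP ? _]; lia.
- left=> z Jz; have [k gk_z] := g_gen z Jz.
  apply: (eqmod_trans I_normal (eqmod_sym I_normal gk_z)).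
  apply: (eqmod_trans I_normal _ (eqmod_lambda I_stable b gk_z)).
  by have := lambda_zmul k; rewrite c1 mul1r.
- right=> z Jz z_fix; have [k gk_z] := g_gen z Jz.
  have k0 : k = 0%R.
    suff : (- k)%R = k by lia.
    apply: zmul_inj; have := lambda_zmul k; rewrite cN1 mulN1r.
    move/(eqmod_trans I_normal); apply.
    apply: (eqmod_trans I_normal (eqmod_lambda I_stable b gk_z)).
    exact: (eqmod_trans I_normal (eqmod_sym I_normal z_fix) (eqmod_sym I_normal gk_z)).
  by apply/eqmod0; move: gk_z; rewrite k0.
Qed.
End Brace.

Lemma factor_acts_trivially (B : brace) (I J : B -> Prop) b :
  left_nilpotent B -> is_ideal I -> is_ideal J ->
  (factor_inf_cyclic I J /\ factor_in_socle I J) \/ factor_prime_order I J ->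
  acts_trivially_mod I J b.
Proof.
move=> lnil I_ideal J_ideal J_factor.
have [I_normal I_stable] := (ideal_add_normal I_ideal, ideal_lambda_stable I_ideal).
have [J_normal J_stable] := (ideal_add_normal J_ideal, ideal_lambda_stable J_ideal).
have [//|fix_in_I] : acts_trivially_mod I J b \/
                     (forall z, J z -> eqmod I z (blambda b z) -> I z).
  case: J_factor => [[J_cyclic _] | [p [p_prime [f [fJ f_inj f_onto]]]]].
    exact: inf_cyclic_dichotomy.
  apply: (prime_factor_dichotomy I_normal J_normal p_prime fJ f_inj f_onto
           (K := fun z => eqmod I z (blambda b z))) => [|x y|x].
  - by rewrite blambda0; apply: eqmod_refl.
  - by rewrite blambdaD; apply: eqmodD.
  - exact: eqmod_lambda_in.
move=> z Jz; apply: eqmod_lambda_in => //.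
exact: (left_nilpotent_fixfree I_normal J_normal J_stable lnil fix_in_I).
Qed.

Theorem theorem3p32 (B : brace) :
  supersoluble B ->
  left_nilpotent B ->
  (exists n : nat, forall a : B, ker_lambda a -> zcent n a) ->
  mul_nilpotent B.
Proof.
move=> [n [I [I0 In I_ideal _ I_factor]]] lnil [c ker_zcent].
have layer_normal i : i <= n -> add_normal (I i) /\ lambda_stable (I i).
  by move/I_ideal => Ii; split; [apply: ideal_add_normal | apply: ideal_lambda_stable].
apply: (trivial_on_layers_mul_nilpotent layer_normal I0 In _ ker_zcent) => b i.
rewrite addn1 => lt_in; apply: factor_acts_trivially => //.
- exact/I_ideal/ltnW.
- exact: I_ideal.
- exact: I_factor.
Qed.
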